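(* Let $\mathcal V$ be a subvariety of $\mathsf V(S_7)$ and let $k\geq 1$. Then $S_c(a_1\cdots a_k)\notin\mathcal V$ if and only if $\mathcal V$ satisfies the identity $x_1\cdots x_k\approx (x_1\cdots x_k)^2$.
   Context: $S_7$ is the ai-semiring on $\{\infty,a,1\}$ with $x+x=x$, $x+y=\infty$ for $x\neq y$, and commutative multiplication with $\infty$ a zero, $a\cdot a=\infty$, $a\cdot 1=a$, $1\cdot1=1$; $\mathsf V(S_7)$ is the variety it generates. For $k\ge1$, $S_c(a_1\cdots a_k)$ is the flat semiring whose elements are $\infty$ together with all nonempty subwords of $a_1\cdots a_k$ in the free commutative semigroup (products $a_{i_1}\cdots a_{i_m}$ with $1\le i_1<\dots<i_m\le k$); the product of two such words is their product if that is again such a subword (i.e. they share no letter) and $\infty$ otherwise; $\infty$ is a multiplicative zero; $x+x=x$ and $x+y=\infty$ for $x\neq y$. *)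

From mathcomp Require Import all_boot.
Set Implicit Arguments. Unset Strict Implicit. Unset Printing Implicit Defensive.

Inductive term : Type :=
| Var : nat -> term
| Add : term -> term -> term
| Mul : term -> term -> term.

Fixpoint eval (T : Type) (add mul : T -> T -> T) (v : nat -> T) (t : term) : T :=
  match t with
  | Var n => v n
  | Add t1 t2 => add (eval add mul v t1) (eval add mul v t2)
  | Mul t1 t2 => mul (eval add mul v t1) (eval add mul v t2)
  end.

Definition satisfies (T : Type) (add mul : T -> T -> T) (u w : term) : Prop :=
  forall v : nat -> T, eval add mul v u = eval add mul v w.

Inductive S7 : Type := S7inf | S7a | S7one.

Definition S7_add (x y : S7) : S7 :=
  match x, y with
  | S7inf, S7inf => S7inf
  | S7a, S7a => S7a
  | S7one, S7one => S7one
  | _, _ => S7inf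
  end.

Definition S7_mul (x y : S7) : S7 :=
  match x, y with
  | S7one, S7one => S7one
  | S7a, S7one => S7a
  | S7one, S7a => S7a
  | _, _ => S7inf
  end.

(* Membership in V(S_7): satisfying every identity of S_7 (Birkhoff).
   Note that the ai-semiring axioms are identities of S_7, so every such
   algebra is an ai-semiring. *)
Definition in_VS7 (T : Type) (add mul : T -> T -> T) : Prop :=
  forall u w : term, satisfies S7_add S7_mul u w -> satisfies add mul u w.

(* The subvariety of V(S_7) defined (relative to V(S_7)) by the set of
   identities Sigma: every subvariety of V(S_7) is of this form. *)
Definition in_subvar (Sigma : term -> term -> Prop)
  (T : Type) (add mul : T -> T -> T) : Prop :=
  in_VS7 add mul /\ forall u w, Sigma u w -> satisfies add mul u w.

Definition subvar_satisfies (Sigma : term -> term -> Prop) (u w : term) : Prop :=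
  forall (T : Type) (add mul : T -> T -> T),
    in_subvar Sigma add mul -> satisfies add mul u w.

(* The flat semiring S_c(a_1 ... a_k): oo (None) together with the nonempty
   subwords of a_1...a_k, i.e. nonempty subsets of {1..k} (indexed by 'I_k). *)
Definition Sc (k : nat) : Type := option {A : {set 'I_k} | A != set0}.

Definition Sc_add (k : nat) (x y : Sc k) : Sc k :=
  if x == y then x else None.

Definition Sc_mul (k : nat) (x y : Sc k) : Sc k :=
  match x, y with
  | Some X, Some Y =>
      if [disjoint val X & val Y] then (insub (val X :|: val Y) : Sc k) else None
  | _, _ => None
  end.

(* The term x_1 x_2 ... x_k (variables x_0, ..., x_{k-1}), for k >= 1 *)
Fixpoint prodx (k : nat) : term :=
  match k with
  | 0 => Var 0
  | 1 => Var 0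
  | k'.+1 => Mul (prodx k') (Var k')
  end.

From mathcomp Require Import all_boot perm.
From HB Require Import structures.
From Stdlib Require Import Classical.
Set Implicit Arguments. Unset Strict Implicit. Unset Printing Implicit Defensive.

(* If S_c(a_1...a_k) lies in V, evaluating x_1...x_k ~ (x_1...x_k)^2 at x_i := a_i
   gives a_1...a_k = oo, so V fails the identity.

   Conversely let T be in V(S_7) and let u ~ w hold in T but fail in S_c.  Since
   S_c is generated by the a_i, we may assume that u, w only use x_1, ..., x_k,
   that u denotes a subword X at x_i := a_i and w does not.  The valuations
   e_j : x_j |-> a, x_i |-> 1 (i <> j) into S_7 separate S_c, so u and w differ
   at some e_j.  Multiplying both by the variables outside X yields an identity
   p ~ s of T, where p = x_1...x_k and s(e_j) <> a = p(e_j).  Now the term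
   p + sum_i s[(i j)] is equal to p in T (p is symmetric in V(S_7) and + is
   idempotent) but equal to p^2 in S_7, whence p ~ p^2 holds in T. *)

Fixpoint subst (s : nat -> term) (t : term) : term :=
  match t with
  | Var n => s n
  | Add t1 t2 => Add (subst s t1) (subst s t2)
  | Mul t1 t2 => Mul (subst s t1) (subst s t2)
  end.

Lemma eval_subst T (add mul : T -> T -> T) v s t :
  eval add mul v (subst s t) = eval add mul (fun n => eval add mul v (s n)) t.
Proof. by elim: t => //= t1 -> t2 ->. Qed.

Lemma eval_ext T (add mul : T -> T -> T) v v' t :
  v =1 v' -> eval add mul v t = eval add mul v' t.
Proof. by move=> vv'; elim: t => //= t1 -> t2 ->. Qed.

Lemma satisfies_subst T (add mul : T -> T -> T) s u w :
  satisfies add mul u w -> satisfies add mul (subst s u) (subst s w).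
Proof. by move=> Huw v; rewrite !eval_subst. Qed.

Fixpoint vars_lt (k : nat) (t : term) : bool :=
  match t with
  | Var n => n < k
  | Add t1 t2 | Mul t1 t2 => vars_lt k t1 && vars_lt k t2
  end.

Lemma eval_vars_lt k T (add mul : T -> T -> T) v v' t :
  vars_lt k t -> (forall n, n < k -> v n = v' n) ->
  eval add mul v t = eval add mul v' t.
Proof.
move=> + vv'; elim: t => [n /vv' //|t1 IH1 t2 IH2|t1 IH1 t2 IH2] /=;
  by case/andP=> /IH1 -> /IH2 ->.
Qed.

Lemma vars_lt_subst k s t : (forall n, vars_lt k (s n)) -> vars_lt k (subst s t).
Proof. by move=> Hs; elim: t => //= t1 -> t2 ->. Qed.

Definition mulvars (t : term) (s : seq nat) : term :=
  foldl (fun acc n => Mul acc (Var n)) t s.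

Lemma eval_mulvars T (add mul : T -> T -> T) v t s :
  eval add mul v (mulvars t s) = foldl (fun x n => mul x (v n)) (eval add mul v t) s.
Proof. by elim: s t => //= n s IHs t; rewrite IHs. Qed.

Lemma vars_lt_mulvars k t s :
  vars_lt k t -> all (fun n => n < k) s -> vars_lt k (mulvars t s).
Proof. by elim: s t => //= n s IHs t Ht /andP[Hn Hs]; apply: IHs; rewrite //= Ht. Qed.

Definition prod_vars (s : seq nat) : term :=
  if s is n :: s' then mulvars (Var n) s' else Var 0.

Lemma prodx_mulvars k : prodx k.+1 = mulvars (Var 0) (iota 1 k).
Proof.
elim: k => [//|k IHk].
rewrite -[prodx _]/(Mul (prodx k.+1) (Var k.+1)) IHk.
by rewrite -(addn1 k) iotaD cats1 /mulvars foldl_rcons add1n addn1.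
Qed.

Lemma vars_lt_prodx k : vars_lt k.+1 (prodx k.+1).
Proof.
rewrite prodx_mulvars; apply: vars_lt_mulvars => //.
by apply/allP => n; rewrite mem_iota add1n => /andP[].
Qed.

Lemma eval_foldr_Add_idem T (add mul : T -> T -> T) I (r : seq I) f base v :
  (forall x, add x x = x) -> (forall i, eval add mul v (f i) = eval add mul v base) ->
  eval add mul v (foldr Add base (map f r)) = eval add mul v base.
Proof. by move=> idem Hf; elim: r => //= i r ->; rewrite Hf idem. Qed.

Lemma set1_neq0 (T : finType) (x : T) : [set x] != set0.
Proof. by apply/set0Pn; exists x; rewrite set11. Qed.

Lemma setT_neq0 (T : finType) (x : T) : [set: T] != set0.
Proof. by apply/set0Pn; exists x; rewrite inE. Qed.

Lemma neq_set_mem (T : finType) (A B : {set T}) :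
  A != B -> exists j, (j \in A) != (j \in B).
Proof.
rewrite eqEsubset negb_and => /orP[] /subsetPn[j jin jout]; exists j.
  by rewrite jin (negbTE jout).
by rewrite jin (negbTE jout).
Qed.

Definition S7_eqb (x y : S7) : bool :=
  match x, y with S7inf, S7inf | S7a, S7a | S7one, S7one => true | _, _ => false end.

Lemma S7_eqP : Equality.axiom S7_eqb. Proof. by do 2 case; constructor. Qed.
HB.instance Definition _ := hasDecEq.Build S7 S7_eqP.

Lemma S7_mulA : associative S7_mul. Proof. by do 3 case. Qed.
Lemma S7_mulC : commutative S7_mul. Proof. by do 2 case. Qed.
Lemma S7_mul1 : left_id S7one S7_mul. Proof. by case. Qed.
HB.instance Definition _ :=
  Monoid.isComLaw.Build S7 S7one S7_mul S7_mulA S7_mulC S7_mul1.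

Lemma S7_addE x y : S7_add x y = if x == y then x else S7inf.
Proof. by case: x; case: y. Qed.

Lemma S7_add_infl x : S7_add S7inf x = S7inf. Proof. by case: x. Qed.
Lemma S7_add_infr x : S7_add x S7inf = S7inf. Proof. by case: x. Qed.
Lemma S7_mul_infl x : S7_mul S7inf x = S7inf. Proof. by case: x. Qed.
Lemma S7_mul_infr x : S7_mul x S7inf = S7inf. Proof. by case: x. Qed.

Lemma S7_mul_eqa_inj x y c : S7_mul x c = S7a -> S7_mul y c = S7a -> x = y.
Proof. by case: x; case: y; case: c. Qed.

Lemma S7_prod_eq1 n (F : 'I_n -> S7) :
  \big[S7_mul/S7one]_(i < n) F i = S7one -> forall i, F i = S7one.
Proof. by move=> + i; rewrite (bigD1 i) //=; case: (F i); case: (\big[_/_]_(_ | _) _). Qed.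

Lemma S7_prod_eqa n (F : 'I_n -> S7) :
  \big[S7_mul/S7one]_(i < n) F i = S7a ->
  exists i0, forall i, F i = if i == i0 then S7a else S7one.
Proof.
elim: n F => [|n IHn] F; first by rewrite big_ord0.
rewrite big_ord_recl; case E0: (F ord0) => //.
- case Eb: (\big[_/_]_(i < n) _) => // _; have H1 := S7_prod_eq1 Eb.
  exists ord0 => i; case: (unliftP ord0 i) => [j ->|->].
  + by rewrite eq_sym (negbTE (neq_lift _ _)) H1.
  + by rewrite eqxx.
- rewrite S7_mul1 => /IHn [i0 Hi0]; exists (lift ord0 i0) => i.
  case: (unliftP ord0 i) => [j ->|->]; first by rewrite Hi0 (inj_eq lift_inj).
  by rewrite E0 (negbTE (neq_lift _ _)).
Qed.

Lemma in_VS7_add_idem T (add mul : T -> T -> T) :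
  in_VS7 add mul -> forall x, add x x = x.
Proof.
move=> HT x; apply: (HT (Add (Var 0) (Var 0)) (Var 0) _ (fun=> x)).
by move=> v /=; rewrite S7_addE eqxx.
Qed.

Notation S7_eval := (eval S7_add S7_mul).

Lemma S7_eval_mulvars v t s :
  S7_eval v (mulvars t s) = S7_mul (S7_eval v t) (\big[S7_mul/S7one]_(n <- s) v n).
Proof.
rewrite eval_mulvars; elim: s (S7_eval v t) => [|n s IHs] x /=.
  by rewrite big_nil Monoid.mulm1.
by rewrite IHs big_cons S7_mulA.
Qed.

Lemma S7_eval_prodx k v :
  S7_eval v (prodx k.+1) = \big[S7_mul/S7one]_(i < k.+1) v i.
Proof.
by rewrite prodx_mulvars S7_eval_mulvars -(big_mkord xpredT) big_ltn // /index_iota subn1.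
Qed.

Lemma S7_eval_const1 t : S7_eval (fun=> S7one) t = S7one.
Proof. by elim: t => //= t1 -> t2 ->. Qed.

Lemma S7_eval_foldr_Add I (r : seq I) f base v :
  S7_eval v (foldr Add base (map f r)) =
  if all (fun i => S7_eval v (f i) == S7_eval v base) r then S7_eval v base else S7inf.
Proof.
elim: r => //= i r ->; rewrite S7_addE.
by case: all; case: eqP => [->|]; rewrite ?eqxx ?andbF.
Qed.

Definition perm_var k (s : {perm 'I_k}) (n : nat) : nat :=
  if insub n is Some i then val (s i) else n.

Lemma perm_var_ord k (s : {perm 'I_k}) (i : 'I_k) : perm_var s i = s i.
Proof. by rewrite /perm_var valK. Qed.

Lemma S7_prodx_perm k (s : {perm 'I_k.+1}) :
  satisfies S7_add S7_mul (subst (Var \o perm_var s) (prodx k.+1)) (prodx k.+1).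
Proof.
move=> v; rewrite eval_subst !S7_eval_prodx [RHS](reindex_inj (@perm_inj _ s)).
by apply: eq_bigr => i _; rewrite /= perm_var_ord.
Qed.

(* The valuations [S7_ind j] separate the elements of Sc(a_1...a_k) (see
   [S7_ind_separates]); variables beyond k go to oo, as they do under [Sc_gen]. *)
Definition S7_ind k (j : 'I_k) (n : nat) : S7 :=
  if n == j then S7a else if n < k then S7one else S7inf.

Lemma S7_ind_ord k (j i : 'I_k) : S7_ind j i = if i == j then S7a else S7one.
Proof. by rewrite /S7_ind (inj_eq val_inj) ltn_ord. Qed.

Lemma S7_prod_ind k (j : 'I_k) (A : {set 'I_k}) :
  \big[S7_mul/S7one]_(i in A) S7_ind j i = if j \in A then S7a else S7one.
Proof.
have Fj i : i != j -> S7_ind j i = S7one by rewrite S7_ind_ord => /negbTE ->.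
case: ifP => Aj.
  by rewrite (bigD1 j) //= big1 => [|i /andP[_ /Fj]//]; rewrite S7_ind_ord eqxx.
by apply: big1 => i Ai; apply: Fj; apply: contraFneq Aj => <-.
Qed.

Lemma S7_ind_prodx k (j : 'I_k.+1) : S7_eval (S7_ind j) (prodx k.+1) = S7a.
Proof.
have := S7_prod_ind j [set: 'I_k.+1]; rewrite inE S7_eval_prodx => <-.
by apply: eq_bigl => i; rewrite inE.
Qed.

(* Where p takes the value a, exactly one x_i0 is a, and renaming by the
   transposition (i0 j) makes s see the valuation [S7_ind j]. *)
Lemma S7_sum_tperm_prodx k (j : 'I_k.+1) s :
  vars_lt k.+1 s -> S7_eval (S7_ind j) s != S7a ->
  satisfies S7_add S7_mul
    (foldr Add (prodx k.+1) [seq subst (Var \o perm_var (tperm i j)) s | i <- enum 'I_k.+1])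
    (Mul (prodx k.+1) (prodx k.+1)).
Proof.
move=> sk sj v; rewrite S7_eval_foldr_Add /= S7_eval_prodx.
case Ep: (\big[S7_mul/S7one]_(i < k.+1) v i).
- by case: all.
- have [i0 Hv] := S7_prod_eqa Ep; rewrite ifF //; apply/negbTE/allPn.
  exists i0; first by rewrite mem_enum.
  rewrite eval_subst (@eval_vars_lt _ _ _ _ _ (S7_ind j) _ sk) //= => n Hn.
  rewrite -[n]/(val (Ordinal Hn)) perm_var_ord Hv S7_ind_ord.
  by rewrite (canF_eq (tpermK i0 j)) tpermL.
- have H1 := S7_prod_eq1 Ep; rewrite ifT //; apply/allP => i _.
  rewrite eval_subst (@eval_vars_lt _ _ _ _ _ (fun=> S7one) _ sk) ?S7_eval_const1 //=.
  by move=> n Hn; rewrite -[n]/(val (Ordinal Hn)) perm_var_ord H1.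
Qed.

Lemma prodx_idem_of_S7_ind k T (add mul : T -> T -> T) s (j : 'I_k.+1) :
  in_VS7 add mul -> vars_lt k.+1 s -> S7_eval (S7_ind j) s != S7a ->
  satisfies add mul (prodx k.+1) s ->
  satisfies add mul (prodx k.+1) (Mul (prodx k.+1) (prodx k.+1)).
Proof.
move=> HT sk sj ps c.
rewrite -(@eval_foldr_Add_idem _ _ _ _ (enum 'I_k.+1)
           (fun i => subst (Var \o perm_var (tperm i j)) s)) //.
- exact: HT _ _ (S7_sum_tperm_prodx sk sj) c.
- exact: in_VS7_add_idem HT.
- move=> i; rewrite -(satisfies_subst (Var \o perm_var (tperm i j)) ps c).
  exact: HT _ _ (S7_prodx_perm _) c.
Qed.

Definition Sc_gen k (n : nat) : Sc k :=
  if insub n is Some i then insub [set i] else None.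

Notation Sc_eval k := (eval (@Sc_add k) (@Sc_mul k) (Sc_gen k)).

Lemma Sc_gen_ord k (i : 'I_k) : Sc_gen k i = insub [set i].
Proof. by rewrite /Sc_gen valK. Qed.

Lemma Sc_mul_insub k (A B : {set 'I_k}) : A != set0 -> B != set0 ->
  Sc_mul (insub A) (insub B) = if [disjoint A & B] then insub (A :|: B) : Sc k else None.
Proof.
move=> A0 B0; case: insubP => [X _ <-|]; last by rewrite A0.
by case: insubP => [Y _ <-|]; last by rewrite B0.
Qed.

Lemma Sc_eval_mulvars k t (A : {set 'I_k}) (l : seq 'I_k) :
  A != set0 -> Sc_eval k t = insub A -> uniq l -> [disjoint l & A] ->
  Sc_eval k (mulvars t (map val l)) = insub (A :|: [set:: l]).
Proof.
elim: l t A => [|i l IHl] t A A0 tA /=; first by rewrite set_nil setU0.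
case/andP=> il ul; rewrite disjoint_cons => /andP[iA lA].
have A0' : A :|: [set i] != set0 by rewrite setU_eq0 negb_and A0.
rewrite (IHl _ (A :|: [set i])) //=.
- by rewrite set_cons setUA.
- by rewrite tA Sc_gen_ord Sc_mul_insub ?set1_neq0 // disjoint_sym disjoints1 iA.
- move: lA; rewrite !disjoint_has => /hasPn lA; apply/hasPn => x xl.
  by rewrite /= in_setU in_set1 negb_or lA //=; apply: contraNneq il => <-.
Qed.

Lemma Sc_eval_prod_vars k (l : seq 'I_k) : uniq l -> l != [::] ->
  Sc_eval k (prod_vars (map val l)) = insub [set:: l].
Proof.
case: l => [//|i l] /andP[il ul] _.
rewrite [prod_vars _]/= (@Sc_eval_mulvars _ _ [set i]) ?set1_neq0 ?set_cons 1?setUC //.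
  exact: Sc_gen_ord.
by rewrite disjoint_sym (eq_disjoint1 (x := i)) // => x; rewrite inE.
Qed.

Lemma Sc_eval_prodx k : Sc_eval k.+1 (prodx k.+1) = insub [set: 'I_k.+1].
Proof.
rewrite prodx_mulvars -[mulvars _ _]/(prod_vars (iota 0 k.+1)) -val_enum_ord.
rewrite Sc_eval_prod_vars ?enum_uniq -?size_eq0 ?size_enum_ord //.
by congr insub; apply/setP => i; rewrite !inE mem_enum.
Qed.

Lemma Sc_eval_prodx_sq k : Sc_eval k.+1 (Mul (prodx k.+1) (prodx k.+1)) = None.
Proof.
have nT := setT_neq0 (@ord0 k).
by rewrite /= Sc_eval_prodx Sc_mul_insub // -setI_eq0 setIid (negbTE nT).
Qed.

Definition term_of k (y : Sc k) : term :=
  if y is Some A then prod_vars (map val (enum (val A))) else Mul (prodx k) (prodx k).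

Lemma Sc_eval_term_of k (y : Sc k.+1) : Sc_eval k.+1 (term_of y) = y.
Proof.
case: y => [A|]; last exact: Sc_eval_prodx_sq.
have nA : enum (val A) != [::] by rewrite -size_eq0 -cardE -lt0n card_gt0 (valP A).
by rewrite /= Sc_eval_prod_vars ?enum_uniq // set_enum -[sval A]/(val A) valK.
Qed.

Lemma vars_lt_term_of k (y : Sc k.+1) : vars_lt k.+1 (term_of y).
Proof.
case: y => [A|] /=; last by rewrite vars_lt_prodx.
case: (enum _) => [//|i l] /=; apply: vars_lt_mulvars; first exact: ltn_ord.
by rewrite all_map; apply/allP => j _ /=.
Qed.

Lemma S7_eval_Sc_Some k t X v : Sc_eval k t = Some X ->
  S7_eval v t = \big[S7_mul/S7one]_(i in val X) v i.
Proof.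
elim: t X => [n|t1 IH1 t2 IH2|t1 IH1 t2 IH2] X /=.
- rewrite /Sc_gen; case: insubP => [i _ <-|//].
  by case: insubP => [Y _ EY [<-]|//]; rewrite EY big_set1.
- rewrite /Sc_add; case: eqP => [E12 E1|_ //].
  by rewrite (IH1 _ E1) (IH2 X) -?E12 // S7_addE eqxx.
- case E1: (Sc_eval k t1) => [X1|] //; case E2: (Sc_eval k t2) => [X2|] //.
  rewrite /Sc_mul; case: ifP => // dis; case: insubP => // Z _ EZ [<-].
  by rewrite (IH1 _ E1) (IH2 _ E2) EZ -bigU //; apply: eq_bigl => i; rewrite !inE.
Qed.

Lemma S7_ind_Sc_Some k t X (j : 'I_k) : Sc_eval k t = Some X ->
  S7_eval (S7_ind j) t = if j \in val X then S7a else S7one.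
Proof. by move/S7_eval_Sc_Some ->; rewrite S7_prod_ind. Qed.

Lemma S7_ind_Sc_None k t : Sc_eval k.+1 t = None ->
  exists j : 'I_k.+1, S7_eval (S7_ind j) t = S7inf.
Proof.
elim: t => [n|t1 IH1 t2 IH2|t1 IH1 t2 IH2] /=.
- rewrite /Sc_gen; case: insubP => [i _ _|nk _].
    by case: insubP => //; rewrite set1_neq0.
  exists ord0; rewrite /S7_ind (negbTE nk); case: eqP => // n0.
  by move: nk; rewrite n0.
- case E1: (Sc_eval _ t1) => [X1|]; last first.
    by have [j Hj] := IH1 E1; exists j; rewrite Hj S7_add_infl.
  case E2: (Sc_eval _ t2) => [X2|]; last first.
    by have [j Hj] := IH2 E2; exists j; rewrite Hj S7_add_infr.
  rewrite /Sc_add; case: eqP => // NX _.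
  have /neq_set_mem [j Hj] : val X1 != val X2.
    by apply: contra_not_neq NX => /val_inj ->.
  exists j; rewrite (S7_ind_Sc_Some _ E1) (S7_ind_Sc_Some _ E2) S7_addE.
  by move: Hj; do 2 case: (_ \in _).
- case E1: (Sc_eval _ t1) => [X1|]; last first.
    by have [j Hj] := IH1 E1; exists j; rewrite Hj S7_mul_infl.
  case E2: (Sc_eval _ t2) => [X2|]; last first.
    by have [j Hj] := IH2 E2; exists j; rewrite Hj S7_mul_infr.
  rewrite /Sc_mul; case: ifP => [_|dis _].
    by case: insubP => //; rewrite setU_eq0 (negbTE (valP X1)).
  move/negbT: dis; rewrite -setI_eq0 => /set0Pn [j]; rewrite in_setI => /andP[j1 j2].
  by exists j; rewrite (S7_ind_Sc_Some _ E1) (S7_ind_Sc_Some _ E2) j1 j2.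
Qed.

Lemma S7_ind_separates k u w X :
  Sc_eval k.+1 u = Some X -> Sc_eval k.+1 w <> Some X ->
  exists j : 'I_k.+1, S7_eval (S7_ind j) u <> S7_eval (S7_ind j) w.
Proof.
move=> uX; case Ew: (Sc_eval _ w) => [Y|] wX.
  have /neq_set_mem [j Hj] : val X != val Y.
    by apply: contra_not_neq wX => /val_inj ->.
  exists j; rewrite (S7_ind_Sc_Some _ uX) (S7_ind_Sc_Some _ Ew).
  by move: Hj; do 2 case: (_ \in _).
have [j Hj] := S7_ind_Sc_None Ew.
by exists j; rewrite Hj (S7_ind_Sc_Some _ uX); case: (_ \in _).
Qed.

Lemma prodx_idem_of_Sc_separation k T (add mul : T -> T -> T) u w X :
  in_VS7 add mul -> vars_lt k.+1 w ->
  Sc_eval k.+1 u = Some X -> Sc_eval k.+1 w <> Some X -> satisfies add mul u w ->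
  satisfies add mul (prodx k.+1) (Mul (prodx k.+1) (prodx k.+1)).
Proof.
move=> HT wk uX wX uw.
set c := map val (enum (~: val X)).
have up : satisfies S7_add S7_mul (mulvars u c) (prodx k.+1).
  move=> v; rewrite S7_eval_mulvars (S7_eval_Sc_Some _ uX) big_map big_enum.
  rewrite S7_eval_prodx [RHS](bigID (mem (val X))) /=.
  by congr S7_mul; apply: eq_bigl => i; rewrite !inE.
have [j uw_j] := S7_ind_separates uX wX.
apply: (@prodx_idem_of_S7_ind _ _ _ _ (mulvars w c) j HT).
- by apply: vars_lt_mulvars wk _; rewrite all_map; apply/allP => i _ /=.
- rewrite S7_eval_mulvars; apply/eqP => wa; apply: uw_j; apply/esym/(S7_mul_eqa_inj wa).
  by rewrite -S7_eval_mulvars up S7_ind_prodx.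
- by move=> v; rewrite -(HT _ _ up v) !eval_mulvars uw.
Qed.

Lemma prodx_idem_of_Sc_violation k T (add mul : T -> T -> T) u w (v : nat -> Sc k.+1) :
  in_VS7 add mul -> satisfies add mul u w ->
  eval (@Sc_add _) (@Sc_mul _) v u <> eval (@Sc_add _) (@Sc_mul _) v w ->
  satisfies add mul (prodx k.+1) (Mul (prodx k.+1) (prodx k.+1)).
Proof.
move=> HT uw vuw; pose sigma n := term_of (v n).
have Esigma t : Sc_eval k.+1 (subst sigma t) = eval (@Sc_add _) (@Sc_mul _) v t.
  by rewrite eval_subst; apply: eval_ext => n; exact: Sc_eval_term_of.
have sigma_k t : vars_lt k.+1 (subst sigma t).
  by apply: vars_lt_subst => n; exact: vars_lt_term_of.
have UW := satisfies_subst sigma uw.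
case Eu: (eval _ _ v u) vuw => [X|] vuw.
  apply: (prodx_idem_of_Sc_separation (X := X) HT (sigma_k w) _ _ UW);
    by rewrite !Esigma ?Eu // => /esym /vuw.
case Ew: (eval _ _ v w) vuw => [X|] // _.
apply: (prodx_idem_of_Sc_separation (X := X) HT (sigma_k u) _ _ (fun c => esym (UW c)));
  by rewrite !Esigma ?Eu ?Ew.
Qed.

Theorem proposition3p8 (Sigma : term -> term -> Prop) (k : nat) (hk : 1 <= k) :
  ~ in_subvar Sigma (@Sc_add k) (@Sc_mul k) <->
  subvar_satisfies Sigma (prodx k) (Mul (prodx k) (prodx k)).
Proof.
case: k hk => // k _; split=> [Sc_notin T add mul [HT HSigma] | pp Sc_in].
- apply: NNPP => not_pp; apply: Sc_notin.
  split=> u w uw; apply: NNPP => /not_all_ex_not [v vuw]; apply: not_pp.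
    exact: prodx_idem_of_Sc_violation HT (HT _ _ uw) vuw.
  exact: prodx_idem_of_Sc_violation HT (HSigma _ _ uw) vuw.
- have := pp _ _ _ Sc_in (Sc_gen k.+1).
  by rewrite Sc_eval_prodx_sq Sc_eval_prodx; case: insubP => //; rewrite (setT_neq0 ord0).
Qed.
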